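(* Let $A$ be a flexible 0-dialgebra with involution which satisfies, for all $x,y,z\in A$ and each $\circ\in\{\dashv,\times,\vdash\}$, the identities $(x,y,z)_\circ+(x^\ast,y,z)_\circ=0$, $(x,y,z)_\circ+(x,y^\ast,z)_\circ=0$ and $(x,y,z)_\circ+(x,y,z^\ast)_\circ=0$. Then for all $x,y,z\in A$: $(x,y,z)_\dashv+(z^\ast,y^\ast,x)_\vdash=0$, $(x,y,z)_\dashv+(z,y^\ast,x^\ast)_\vdash=0$, $(x,y,z)_\times+(z^\ast,y^\ast,x)_\times=0$, $(x,y,z)_\times+(z,y^\ast,x^\ast)_\times=0$, $(x,y,z)_\dashv-(x^\ast,y^\ast,z)_\dashv=0$, and $(x,y,z)_\times-(x^\ast,y^\ast,z)_\times=0$.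
   Context: A 0-dialgebra with involution is a vector space with bilinear operations $\dashv,\vdash$ satisfying $a\dashv(b\dashv c)=a\dashv(b\vdash c)$ and $(a\dashv b)\vdash c=(a\vdash b)\vdash c$, together with a linear map $\ast$ with $(a^\ast)^\ast=a$, $(a\dashv b)^\ast=b^\ast\vdash a^\ast$, $(a\vdash b)^\ast=b^\ast\dashv a^\ast$. Associators: $(a,b,c)_\dashv=(a\dashv b)\dashv c-a\dashv(b\dashv c)$, $(a,b,c)_\times=(a\vdash b)\dashv c-a\vdash(b\dashv c)$, $(a,b,c)_\vdash=(a\vdash b)\vdash c-a\vdash(b\vdash c)$. The 0-dialgebra is flexible if $(a,b,c)_\dashv+(c,b,a)_\vdash=0$ and $(a,b,c)_\times+(c,b,a)_\times=0$ for all $a,b,c$. *)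

From HB Require Import structures.
From mathcomp Require Import all_boot all_order all_algebra.
Set Implicit Arguments. Unset Strict Implicit. Unset Printing Implicit Defensive.
Import GRing.Theory.
Local Open Scope ring_scope.

(* A vector space V over a field F, with two bilinear products
   l (= "dashv") and r (= "vdash") and a linear map s (= involution "*"). *)

Definition bilinear_op (F : fieldType) (V : lmodType F) (m : V -> V -> V) :=
  (forall a b c, m (a + b) c = m a c + m b c) /\
  (forall a b c, m a (b + c) = m a b + m a c) /\
  (forall (k : F) a b, m (k *: a) b = k *: m a b) /\
  (forall (k : F) a b, m a (k *: b) = k *: m a b).

Definition linear_map (F : fieldType) (V : lmodType F) (s : V -> V) :=
  (forall a b, s (a + b) = s a + s b) /\ (forall (k : F) a, s (k *: a) = k *: s a).

Definition zero_dialgebra_inv (F : fieldType) (V : lmodType F)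
    (l r : V -> V -> V) (s : V -> V) :=
  [/\ bilinear_op l, bilinear_op r, linear_map s,
      (forall a b c, l a (l b c) = l a (r b c)) &
      (forall a b c, r (l a b) c = r (r a b) c)] /\
  [/\ (forall a, s (s a) = a),
      (forall a b, s (l a b) = r (s b) (s a)) &
      (forall a b, s (r a b) = l (s b) (s a))].

Definition star_kills (F : fieldType) (V : lmodType F) (s : V -> V)
    (asc : V -> V -> V -> V) :=
  forall x y z,
    [/\ asc x y z + asc (s x) y z = 0,
        asc x y z + asc x (s y) z = 0 &
        asc x y z + asc x y (s z) = 0].

Definition asl (F : fieldType) (V : lmodType F) (l r : V -> V -> V) (a b c : V) : V :=
  l (l a b) c - l a (l b c).
Definition asx (F : fieldType) (V : lmodType F) (l r : V -> V -> V) (a b c : V) : V :=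
  l (r a b) c - r a (l b c).
Definition asr (F : fieldType) (V : lmodType F) (l r : V -> V -> V) (a b c : V) : V :=
  r (r a b) c - r a (r b c).

Definition flexible (F : fieldType) (V : lmodType F) (l r : V -> V -> V) :=
  (forall a b c, asl l r a b c + asr l r c b a = 0) /\
  (forall a b c, asx l r a b c + asx l r c b a = 0).

From mathcomp Require Import all_boot all_order all_algebra.
Import GRing.Theory.
Local Open Scope ring_scope.

(* Starring one argument negates the associator, so starring two of them
   leaves it unchanged; flexibility then moves the starred triple to the
   other side. *)

Section StarKills.

Variables (F : fieldType) (V : lmodType F) (s : V -> V) (asc : V -> V -> V -> V).
Hypothesis kills : star_kills s asc.

Lemma star_kills_star12 a b c : asc (s a) (s b) c = asc a b c.
Proof.
have [/eqP + _ _] := kills a (s b) c; rewrite addrC addr_eq0 => /eqP ->.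
by have [_ /eqP + _] := kills a b c; rewrite addr_eq0 => /eqP ->.
Qed.

Lemma star_kills_star23 a b c : asc a (s b) (s c) = asc a b c.
Proof.
have [_ _ /eqP +] := kills a (s b) c; rewrite addrC addr_eq0 => /eqP ->.
by have [_ /eqP + _] := kills a b c; rewrite addr_eq0 => /eqP ->.
Qed.

End StarKills.

Theorem lemma7p4 (F : fieldType) (V : lmodType F)
    (l r : V -> V -> V) (s : V -> V) :
  zero_dialgebra_inv l r s ->
  flexible l r ->
  star_kills s (asl l r) -> star_kills s (asx l r) -> star_kills s (asr l r) ->
  forall x y z,
    [/\ asl l r x y z + asr l r (s z) (s y) x = 0,
        asl l r x y z + asr l r z (s y) (s x) = 0,
        asx l r x y z + asx l r (s z) (s y) x = 0 &
        asx l r x y z + asx l r z (s y) (s x) = 0] /\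
    (asl l r x y z - asl l r (s x) (s y) z = 0 /\
     asx l r x y z - asx l r (s x) (s y) z = 0).
Proof.
move=> _ [flex_lr flex_x] kills_l kills_x kills_r x y z.
split; first split.
- by rewrite star_kills_star12 // flex_lr.
- by rewrite star_kills_star23 // flex_lr.
- by rewrite star_kills_star12 // flex_x.
- by rewrite star_kills_star23 // flex_x.
by rewrite !star_kills_star12 // !subrr.
Qed.
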